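(* Let $E$ be a sequentially complete locally convex space, $A$ a closed linear operator on $E$, $0<\tau\le\infty$ and $n\in\mathbb N_0$. (i) Suppose that for every $x\in D(A^n)$ the abstract Cauchy problem $(ACP_1)$ has a unique mild solution $u(\cdot;x)$ on $[0,\tau)$. Then $A$ is stationary dense and $n(A)\le n$. (ii) Suppose that $A$ generates a locally equicontinuous $n$-times integrated semigroup $(S_n(t))_{t\in[0,\tau)}$ on $E$. Then $A$ is stationary dense and $n(A)\le n$.
   Context: $E$ is a Hausdorff sequentially complete locally convex space whose topology is given by a family $\circledast$ of continuous seminorms. For a closed linear operator $A$ on $E$, $D(A^m)$ denotes the domain of the $m$-th power of $A$. $A$ is called stationary dense if $$n(A):=\inf\{k\in\mathbb N_0:\ D(A^m)\subseteq\overline{D(A^{m+1})}\ \text{for all } m\ge k\}<\infty .$$ The abstract Cauchy problem $(ACP_1)$ is: find $u\in C([0,\tau):[D(A)])\cap C^1([0,\tau):E)$ with $u'(t)=Au(t)$ for $t\in[0,\tau)$ and $u(0)=x$. A mild solution of $(ACP_1)$ is a continuous function $u(\cdot;x):[0,\tau)\to E$ such that $\int_0^t u(s;x)\,ds\in D(A)$ and $A\int_0^t u(s;x)\,ds=u(t;x)-x$ for all $t\in[0,\tau)$. A locally equicontinuous $n$-times integrated semigroup generated by $A$ is a strongly continuous family $(S_n(t))_{t\in[0,\tau)}$ of continuous linear operators on $E$, equicontinuous on every compact subinterval of $[0,\tau)$, with $S_n(t)A\subseteq AS_n(t)$, such that for all $x\in E$ and $t\in[0,\tau)$, $\int_0^tS_n(s)x\,ds\in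 D(A)$ and $A\int_0^tS_n(s)x\,ds=S_n(t)x-\frac{t^n}{n!}x$, and $A$ is the (integral) generator of this family. *)

From Stdlib Require Import Reals List Arith.
Open Scope R_scope.

Record LCS := {
  car :> Type;
  vzero : car;
  vadd : car -> car -> car;
  vopp : car -> car;
  vscal : R -> car -> car;
  vadd_assoc : forall x y z, vadd x (vadd y z) = vadd (vadd x y) z;
  vadd_comm : forall x y, vadd x y = vadd y x;
  vadd_zero : forall x, vadd x vzero = x;
  vadd_opp : forall x, vadd x (vopp x) = vzero;
  vscal_one : forall x, vscal 1 x = x;
  vscal_assoc : forall a b x, vscal a (vscal b x) = vscal (a * b) x;
  vscal_distr_v : forall a x y, vscal a (vadd x y) = vadd (vscal a x) (vscal a y);
  vscal_distr_r : forall a b x, vscal (a + b) x = vadd (vscal a x) (vscal b x);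
  idx : Type;
  sn : idx -> car -> R;
  sn_nonneg : forall i x, 0 <= sn i x;
  sn_triangle : forall i x y, sn i (vadd x y) <= sn i x + sn i y;
  sn_homog : forall i a x, sn i (vscal a x) = Rabs a * sn i x;
  sn_sep : forall x, (forall i, sn i x = 0) -> x = vzero;
  seq_complete : forall u : nat -> car,
    (forall i eps, 0 < eps -> exists N, forall m k, (N <= m)%nat -> (N <= k)%nat ->
        sn i (vadd (u m) (vopp (u k))) < eps) ->
    exists l, forall i eps, 0 < eps -> exists N, forall m, (N <= m)%nat ->
        sn i (vadd (u m) (vopp l)) < eps
}.

Arguments vzero {_}.
Arguments vadd {_}.
Arguments vopp {_}.
Arguments vscal {_}.
Arguments sn {_}.

Definition vsub {E : LCS} (x y : E) : E := vadd x (vopp y).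

(** Topological closure of a set (basic neighbourhoods: finitely many seminorms). *)
Definition in_closure {E : LCS} (S : E -> Prop) (x : E) : Prop :=
  forall (F : list (idx E)) (eps : R), 0 < eps ->
    exists y, S y /\ forall i, In i F -> sn i (vsub x y) < eps.

Record Op (E : LCS) := { dom : E -> Prop; app : E -> E }.
Arguments dom {_}.
Arguments app {_}.

Definition linear_op {E : LCS} (A : Op E) : Prop :=
  dom A vzero /\
  (forall x y, dom A x -> dom A y -> dom A (vadd x y) /\ app A (vadd x y) = vadd (app A x) (app A y)) /\
  (forall a x, dom A x -> dom A (vscal a x) /\ app A (vscal a x) = vscal a (app A x)).

Definition closed_op {E : LCS} (A : Op E) : Prop :=
  linear_op A /\
  forall x y : E,
    (forall (F : list (idx E)) (eps : R), 0 < eps ->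
       exists z, dom A z /\ forall i, In i F ->
         sn i (vsub x z) < eps /\ sn i (vsub y (app A z)) < eps) ->
    dom A x /\ app A x = y.

Fixpoint domPow {E : LCS} (A : Op E) (m : nat) (x : E) : Prop :=
  match m with
  | O => True
  | S m' => dom A x /\ domPow A m' (app A x)
  end.

(** k belongs to the set whose infimum is n(A). *)
Definition stat_index {E : LCS} (A : Op E) (k : nat) : Prop :=
  forall m, (k <= m)%nat -> forall x, domPow A m x -> in_closure (domPow A (S m)) x.

(** "A is stationary dense and n(A) <= n":  inf {k | stat_index A k} <= n
    (the infimum over a set of naturals is attained). *)
Definition stat_dense_le {E : LCS} (A : Op E) (n : nat) : Prop :=
  exists k, (k <= n)%nat /\ stat_index A k.

(** * The interval [0, tau), tau in (0, +oo];  None encodes tau = +oo. *)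
Definition tau_pos (tau : option R) : Prop :=
  match tau with Some T => 0 < T | None => True end.
Definition in_I (tau : option R) (t : R) : Prop :=
  0 <= t /\ match tau with Some T => t < T | None => True end.

(* A tagged partition of [a,b] : list of (right endpoint, tag). *)
Fixpoint tagged_part (a b : R) (l : list (R * R)) : Prop :=
  match l with
  | nil => a = b
  | (x, xi) :: l' => a <= xi <= x /\ tagged_part x b l'
  end.

Fixpoint fine (delta a : R) (l : list (R * R)) : Prop :=
  match l with
  | nil => True
  | (x, _) :: l' => x - a < delta /\ fine delta x l'
  end.

Fixpoint rsum {E : LCS} (f : R -> E) (a : R) (l : list (R * R)) : E :=
  match l with
  | nil => vzero
  | (x, xi) :: l' => vadd (vscal (x - a) (f xi)) (rsum f x l')
  end.

Definition is_integral {E : LCS} (f : R -> E) (a b : R) (y : E) : Prop :=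
  forall i eps, 0 < eps -> exists delta, 0 < delta /\
    forall l, tagged_part a b l -> fine delta a l -> sn i (vsub (rsum f a l) y) < eps.

Definition cont_on_I {E : LCS} (tau : option R) (u : R -> E) : Prop :=
  forall t, in_I tau t -> forall i eps, 0 < eps -> exists delta, 0 < delta /\
    forall s, in_I tau s -> Rabs (s - t) < delta -> sn i (vsub (u s) (u t)) < eps.

Definition mild_solution {E : LCS} (A : Op E) (tau : option R) (x : E) (u : R -> E) : Prop :=
  cont_on_I tau u /\
  forall t, in_I tau t -> exists y, is_integral u 0 t y /\ dom A y /\ app A y = vsub (u t) x.

Definition unique_mild {E : LCS} (A : Op E) (tau : option R) (x : E) : Prop :=
  exists u, mild_solution A tau x u /\
    forall v, mild_solution A tau x v -> forall t, in_I tau t -> v t = u t.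

Definition linear_map {E : LCS} (T : E -> E) : Prop :=
  (forall x y, T (vadd x y) = vadd (T x) (T y)) /\ (forall a x, T (vscal a x) = vscal a (T x)).

Definition continuous_map {E : LCS} (T : E -> E) : Prop :=
  forall x0 i eps, 0 < eps -> exists (F : list (idx E)) delta, 0 < delta /\
    forall x, (forall j, In j F -> sn j (vsub x x0) < delta) -> sn i (vsub (T x) (T x0)) < eps.

Definition tn_fact (n : nat) (t : R) : R := t ^ n / INR (Factorial.fact n).

Definition integral_generator {E : LCS} (A : Op E) (tau : option R) (n : nat) (S : R -> E -> E) : Prop :=
  forall x y, (dom A x /\ app A x = y) <->
    (forall t, in_I tau t -> is_integral (fun s => S s y) 0 t (vsub (S t x) (vscal (tn_fact n t) x))).

Definition generates_int_semigroup {E : LCS} (A : Op E) (tau : option R) (n : nat)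
    (S : R -> E -> E) : Prop :=
  (forall t, in_I tau t -> linear_map (S t) /\ continuous_map (S t)) /\
  (forall x, cont_on_I tau (fun t => S t x)) /\
  (forall T, in_I tau T -> forall x0 i eps, 0 < eps -> exists (F : list (idx E)) delta, 0 < delta /\
     forall t x, 0 <= t <= T -> (forall j, In j F -> sn j (vsub x x0) < delta) ->
       sn i (vsub (S t x) (S t x0)) < eps) /\
  (forall t, in_I tau t -> forall x, dom A x -> dom A (S t x) /\ app A (S t x) = S t (app A x)) /\
  (forall t x, in_I tau t -> exists y, is_integral (fun s => S s x) 0 t y /\ dom A y /\
      app A y = vsub (S t x) (vscal (tn_fact n t) x)) /\
  integral_generator A tau n S.

(* (ii) For x in D(A^m), m >= n, the vectors y_t = int_0^t S(s)x ds lie in D(A) with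
   A y_t = S(t)x - t^n/n! x, which is again in D(A^m) because S(t) commutes with A; so
   y_t is in D(A^(m+1)).  Feeding the integral equation into itself shows that
   S(s)z - s^n/n! z = o(s^j) for z in D(A^j), j <= n; for j = n this gives
   y_t = t^(n+1)/(n+1)! x + o(t^(n+1)), hence (n+1)!/t^(n+1) y_t -> x as t -> 0.
   (i) Same argument with the iterated primitives V_k of the mild solution u: closedness
   of A gives A V_(k+1)(t) = V_k(t) - t^k/k! x, so V_(m+1)(t) is in D(A^(m+1)) when x is in
   D(A^m), and continuity of u at 0 gives V_(m+1)(t) = t^(m+1)/(m+1)! x + o(t^(m+1)). *)

From Stdlib Require Import Reals List Lra Lia Classical ClassicalEpsilon.
Open Scope R_scope.

Section VectorSpace.
Variable E : LCS.
Implicit Types x y z w : E.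

Lemma vadd_zero_l x : vadd vzero x = x.
Proof. rewrite vadd_comm; apply vadd_zero. Qed.

Lemma vadd_cancel_l x y z : vadd x y = vadd x z -> y = z.
Proof.
  intros H. rewrite <- (vadd_zero_l y), <- (vadd_zero_l z).
  rewrite <- (vadd_opp _ x), (vadd_comm _ x (vopp x)), <- !vadd_assoc, H. reflexivity.
Qed.

Lemma vopp_unique x y : vadd x y = vzero -> y = vopp x.
Proof. intros H. apply (vadd_cancel_l x). rewrite H, vadd_opp. reflexivity. Qed.

Lemma vopp_vopp x : vopp (vopp x) = x.
Proof. symmetry. apply vopp_unique. rewrite vadd_comm. apply vadd_opp. Qed.

Lemma vadd_swap x y z w : vadd (vadd x y) (vadd z w) = vadd (vadd x z) (vadd y w).
Proof. rewrite <- !vadd_assoc. f_equal. rewrite !vadd_assoc. f_equal. apply vadd_comm. Qed.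

Lemma vopp_add x y : vopp (vadd x y) = vadd (vopp x) (vopp y).
Proof. symmetry. apply vopp_unique. rewrite vadd_swap, !vadd_opp. apply vadd_zero. Qed.

Lemma vopp_zero : vopp (@vzero E) = vzero.
Proof. symmetry; apply vopp_unique. apply vadd_zero. Qed.

Lemma vscal_zero_r a : vscal a (@vzero E) = vzero.
Proof.
  apply (vadd_cancel_l (vscal a vzero)). rewrite <- vscal_distr_v, !vadd_zero. reflexivity.
Qed.

Lemma vscal_zero_l x : vscal 0 x = vzero.
Proof.
  apply (vadd_cancel_l (vscal 0 x)). rewrite <- vscal_distr_r, Rplus_0_r, vadd_zero.
  reflexivity.
Qed.

Lemma vscal_opp_l a x : vscal (- a) x = vopp (vscal a x).
Proof. apply vopp_unique. rewrite <- vscal_distr_r, Rplus_opp_r. apply vscal_zero_l. Qed.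

Lemma vscal_opp_r a x : vscal a (vopp x) = vopp (vscal a x).
Proof. apply vopp_unique. rewrite <- vscal_distr_v, vadd_opp. apply vscal_zero_r. Qed.

Lemma vscal_m1 x : vscal (- (1)) x = vopp x.
Proof. rewrite vscal_opp_l, vscal_one. reflexivity. Qed.

Lemma vsub_add x y z w : vsub (vadd x y) (vadd z w) = vadd (vsub x z) (vsub y w).
Proof. unfold vsub. rewrite vopp_add. apply vadd_swap. Qed.

Lemma vscal_sub a x y : vscal a (vsub x y) = vsub (vscal a x) (vscal a y).
Proof. unfold vsub. rewrite vscal_distr_v, vscal_opp_r. reflexivity. Qed.

Lemma vsub_scal_l a b x : vsub (vscal a x) (vscal b x) = vscal (a - b) x.
Proof. unfold vsub, Rminus. rewrite vscal_distr_r, vscal_opp_l. reflexivity. Qed.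

Lemma vsub_diag x : vsub x x = vzero.
Proof. apply vadd_opp. Qed.

Lemma vsub_zero_r x : vsub x vzero = x.
Proof. unfold vsub. rewrite vopp_zero. apply vadd_zero. Qed.

Lemma vsub_opp x y : vopp (vsub x y) = vsub y x.
Proof. unfold vsub. rewrite vopp_add, vopp_vopp. apply vadd_comm. Qed.

Lemma vsub_chain x y z : vadd (vsub x y) (vsub y z) = vsub x z.
Proof.
  unfold vsub. rewrite (vadd_assoc _ (vadd x (vopp y)) y (vopp z)).
  rewrite <- (vadd_assoc _ x (vopp y) y), (vadd_comm _ (vopp y) y), vadd_opp, vadd_zero.
  reflexivity.
Qed.

Lemma vsub_eq0 x y : vsub x y = vzero -> x = y.
Proof.
  intros H. unfold vsub in H. apply vopp_unique in H.
  rewrite <- (vopp_vopp y), H, vopp_vopp. reflexivity.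
Qed.

Lemma vsub_sub4 x y z w : vsub (vsub x y) (vsub z w) = vsub (vsub x z) (vsub y w).
Proof. unfold vsub. rewrite !vopp_add, !vopp_vopp. apply vadd_swap. Qed.

Lemma sn_zero i : sn i (@vzero E) = 0.
Proof. rewrite <- (vscal_zero_l vzero), sn_homog, Rabs_R0. ring. Qed.

Lemma sn_opp i x : sn i (vopp x) = sn i x.
Proof. rewrite <- vscal_m1, sn_homog, Rabs_Ropp, Rabs_R1. ring. Qed.

Lemma sn_sub_sym i x y : sn i (vsub x y) = sn i (vsub y x).
Proof. rewrite <- vsub_opp, sn_opp. reflexivity. Qed.

Lemma sn_sub_tri i x y z : sn i (vsub x z) <= sn i (vsub x y) + sn i (vsub y z).
Proof. rewrite <- (vsub_chain x y z). apply sn_triangle. Qed.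

Lemma sn_sub_le i x y : sn i (vsub x y) <= sn i x + sn i y.
Proof. unfold vsub. rewrite <- (sn_opp i y). apply sn_triangle. Qed.

Lemma sn_le_sub i x y : sn i x <= sn i (vsub x y) + sn i y.
Proof.
  rewrite <- (vsub_zero_r x) at 1. rewrite <- (vsub_zero_r y) at 2. apply sn_sub_tri.
Qed.

Lemma eq_of_sn_sub_small x y :
  (forall i eps, 0 < eps -> sn i (vsub x y) < eps) -> x = y.
Proof.
  intros H. apply vsub_eq0, sn_sep. intros i. pose proof (sn_nonneg E i (vsub x y)).
  destruct (Req_dec (sn i (vsub x y)) 0) as [h|h]; auto.
  assert (Hpos : 0 < sn i (vsub x y)) by lra. specialize (H i _ Hpos). lra.
Qed.

(* Basic neighbourhoods involve finitely many seminorms, so one radius serves them all. *)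
Lemma common_delta (P : idx E -> R -> Prop) :
  (forall i, exists d, 0 < d /\ forall d', 0 < d' -> d' <= d -> P i d') ->
  forall F : list (idx E), exists d, 0 < d /\ forall i, In i F -> P i d.
Proof.
  intros H F.
  assert (HF : exists d, 0 < d /\ forall i, In i F -> forall d', 0 < d' -> d' <= d -> P i d').
  { induction F as [|j F [d [Hd HF]]].
    - exists 1. split; [lra | intros i []].
    - destruct (H j) as [dj [Hdj Hj]]. exists (Rmin d dj).
      split; [now apply Rmin_glb_lt|].
      pose proof (Rmin_l d dj). pose proof (Rmin_r d dj).
      intros i [<-|Hi] d' Hd' Hle; [apply Hj | apply HF]; auto; lra. }
  destruct HF as [d [Hd HF]]. exists d. split; auto. intros i Hi. apply HF; auto. lra.
Qed.

End VectorSpace.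

Section RiemannIntegral.
Variable E : LCS.
Implicit Types f g : R -> E.

Lemma tagged_part_le a b l : tagged_part a b l -> a <= b.
Proof.
  revert a. induction l as [|[x xi] l IH]; simpl; intros a H; [lra|].
  destruct H as [H1 H2]. apply IH in H2. lra.
Qed.

Lemma rsum_ext_on f g a b l : tagged_part a b l ->
  (forall s, a <= s <= b -> f s = g s) -> rsum f a l = rsum g a l.
Proof.
  revert a. induction l as [|[x xi] l IH]; simpl; intros a H Hfg; auto.
  destruct H as [H1 H2]. pose proof (tagged_part_le _ _ _ H2).
  rewrite Hfg, (IH x H2); auto; [|lra]. intros s Hs; apply Hfg; lra.
Qed.

Lemma rsum_sub f g a l :
  rsum (fun s => vsub (f s) (g s)) a l = vsub (rsum f a l) (rsum g a l).
Proof.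
  revert a. induction l as [|[x xi] l IH]; simpl; intros a.
  - now rewrite vsub_zero_r.
  - rewrite IH, vscal_sub. symmetry. apply vsub_add.
Qed.

Lemma rsum_app f a s l l' : tagged_part a s l ->
  rsum f a (l ++ l') = vadd (rsum f a l) (rsum f s l').
Proof.
  revert a. induction l as [|[x xi] l IH]; simpl; intros a H.
  - subst. now rewrite vadd_zero_l.
  - destruct H. rewrite IH by auto. apply vadd_assoc.
Qed.

Lemma rsum_bound i f a b l M : tagged_part a b l ->
  (forall s, a <= s <= b -> sn i (f s) <= M) -> sn i (rsum f a l) <= M * (b - a).
Proof.
  revert a. induction l as [|[x xi] l IH]; simpl; intros a H Hf.
  - subst. rewrite sn_zero. lra.
  - destruct H as [H1 H2]. pose proof (tagged_part_le _ _ _ H2).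
    eapply Rle_trans; [apply sn_triangle|]. rewrite sn_homog, Rabs_pos_eq by lra.
    assert (sn i (f xi) <= M) by (apply Hf; lra).
    assert (sn i (rsum f x l) <= M * (b - x)) by (apply IH; auto; intros; apply Hf; lra).
    pose proof (sn_nonneg E i (f xi)). nra.
Qed.

Lemma rsum_point f a l : tagged_part a a l -> rsum f a l = vzero.
Proof.
  revert a. induction l as [|[x xi] l IH]; simpl; intros a H; auto.
  destruct H as [H1 H2]. pose proof (tagged_part_le _ _ _ H2).
  replace x with a in * by lra.
  rewrite IH, Rminus_diag, vscal_zero_l, vadd_zero; auto.
Qed.

Lemma tagged_part_app a s r l l' :
  tagged_part a s l -> tagged_part s r l' -> tagged_part a r (l ++ l').
Proof.
  revert a. induction l as [|[x xi] l IH]; simpl; intros a H1 H2.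
  - now subst.
  - destruct H1; split; auto.
Qed.

Lemma fine_app d a s l l' :
  tagged_part a s l -> fine d a l -> fine d s l' -> fine d a (l ++ l').
Proof.
  revert a. induction l as [|[x xi] l IH]; simpl; intros a H1 F1 F2.
  - now subst.
  - destruct H1, F1; split; auto.
Qed.

Lemma fine_mono d d' a l : fine d a l -> d <= d' -> fine d' a l.
Proof.
  revert a. induction l as [|[x xi] l IH]; simpl; intros a H Hd; auto.
  destruct H; split; auto. lra.
Qed.

Fixpoint unif_part (a h : R) (k : nat) : list (R * R) :=
  match k with O => nil | S k' => (a + h, a) :: unif_part (a + h) h k' end.

Lemma unif_part_tagged a h k : 0 <= h -> tagged_part a (a + INR k * h) (unif_part a h k).
Proof.
  revert a. induction k as [|k IH]; cbn [unif_part tagged_part]; intros a Hh.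
  - simpl; ring.
  - split; [lra|].
    replace (a + INR (S k) * h) with (a + h + INR k * h) by (rewrite S_INR; ring).
    now apply IH.
Qed.

Lemma unif_part_fine a h k d : h < d -> fine d a (unif_part a h k).
Proof. revert a. induction k as [|k IH]; simpl; intros a Hh; auto. split; auto. lra. Qed.

Definition mesh_part (a b : R) (N : nat) : list (R * R) :=
  unif_part a ((b - a) / INR (S N)) (S N).

Lemma mesh_part_tagged a b N : a <= b -> tagged_part a b (mesh_part a b N).
Proof.
  intros Hab. assert (HN : 0 < INR (S N)) by (apply lt_0_INR; lia).
  unfold mesh_part. replace b with (a + INR (S N) * ((b - a) / INR (S N))) at 1 by (field; lra).
  apply unif_part_tagged. apply Rmult_le_pos; [lra | apply Rlt_le, Rinv_0_lt_compat; lra].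
Qed.

Lemma mesh_part_fine a b d : a <= b -> 0 < d ->
  exists N, forall m, (N <= m)%nat -> fine d a (mesh_part a b m).
Proof.
  intros Hab Hd. destruct (INR_archimed d (b - a) Hd) as [N HN].
  exists N. intros m Hm. apply unif_part_fine.
  assert (HNm : INR N <= INR m) by (apply le_INR; lia). pose proof (pos_INR N).
  rewrite S_INR. apply (Rmult_lt_reg_r (INR m + 1)); [lra|].
  unfold Rdiv. rewrite Rmult_assoc, Rinv_l by lra. nra.
Qed.

Lemma fine_part_exists a b d : a <= b -> 0 < d -> exists l, tagged_part a b l /\ fine d a l.
Proof.
  intros Hab Hd. destruct (mesh_part_fine a b d Hab Hd) as [N HN].
  exists (mesh_part a b N). split; [now apply mesh_part_tagged | apply HN; lia].
Qed.

Lemma integral_unique f a b y1 y2 :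
  a <= b -> is_integral f a b y1 -> is_integral f a b y2 -> y1 = y2.
Proof.
  intros Hab H1 H2. apply eq_of_sn_sub_small. intros i eps Heps.
  destruct (H1 i (eps/2)) as [d1 [Hd1 P1]]; [lra|].
  destruct (H2 i (eps/2)) as [d2 [Hd2 P2]]; [lra|].
  destruct (fine_part_exists a b (Rmin d1 d2) Hab) as [l [Hl Hf]]; [now apply Rmin_glb_lt|].
  specialize (P1 l Hl (fine_mono _ _ _ _ Hf (Rmin_l _ _))).
  specialize (P2 l Hl (fine_mono _ _ _ _ Hf (Rmin_r _ _))).
  pose proof (sn_sub_tri E i y1 (rsum f a l) y2).
  rewrite (sn_sub_sym E i y1 (rsum f a l)) in H. lra.
Qed.

Lemma integral_point f a : is_integral f a a vzero.
Proof.
  intros i eps Heps. exists 1. split; [lra|]. intros l Hl _.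
  now rewrite rsum_point, vsub_zero_r, sn_zero.
Qed.

Lemma integral_ext f g a b y : (forall s, a <= s <= b -> f s = g s) ->
  is_integral f a b y -> is_integral g a b y.
Proof.
  intros Hfg H i eps Heps. destruct (H i eps Heps) as [d [Hd P]]. exists d. split; auto.
  intros l Hl Hf. rewrite <- (rsum_ext_on f g a b l); auto.
Qed.

Lemma integral_sub f g a b y z : is_integral f a b y -> is_integral g a b z ->
  is_integral (fun s => vsub (f s) (g s)) a b (vsub y z).
Proof.
  intros H1 H2 i eps Heps.
  destruct (H1 i (eps/2)) as [d1 [Hd1 P1]]; [lra|].
  destruct (H2 i (eps/2)) as [d2 [Hd2 P2]]; [lra|].
  exists (Rmin d1 d2). split; [now apply Rmin_glb_lt|]. intros l Hl Hf.
  specialize (P1 l Hl (fine_mono _ _ _ _ Hf (Rmin_l _ _))).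
  specialize (P2 l Hl (fine_mono _ _ _ _ Hf (Rmin_r _ _))).
  rewrite rsum_sub, vsub_sub4. eapply Rle_lt_trans; [apply sn_sub_le | lra].
Qed.

Lemma integral_bound i f a b y M : a <= b ->
  (forall s, a <= s <= b -> sn i (f s) <= M) -> is_integral f a b y ->
  sn i y <= M * (b - a).
Proof.
  intros Hab Hf H. apply Rle_plus_epsilon. intros eps Heps.
  destruct (H i eps Heps) as [d [Hd P]].
  destruct (fine_part_exists a b d Hab Hd) as [l [Hl Hfl]].
  specialize (P l Hl Hfl). pose proof (rsum_bound i f a b l M Hl Hf).
  pose proof (sn_le_sub E i y (rsum f a l)). rewrite sn_sub_sym in H1. lra.
Qed.

Lemma integral_increment_bound i f a s r ys yr M : a <= s <= r ->
  is_integral f a s ys -> is_integral f a r yr ->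
  (forall q, a <= q <= r -> sn i (f q) <= M) -> sn i (vsub yr ys) <= M * (r - s).
Proof.
  intros Hsr Hs Hr Hf. apply Rle_plus_epsilon. intros eps Heps.
  destruct (Hs i (eps / 2)) as [d1 [Hd1 P1]]; [lra|].
  destruct (Hr i (eps / 2)) as [d2 [Hd2 P2]]; [lra|].
  set (d := Rmin d1 d2). assert (Hd : 0 < d) by now apply Rmin_glb_lt.
  destruct (fine_part_exists a s d ltac:(lra) Hd) as [l [Hl Fl]].
  destruct (fine_part_exists s r d ltac:(lra) Hd) as [l' [Hl' Fl']].
  specialize (P1 l Hl (fine_mono _ _ _ _ Fl (Rmin_l _ _))).
  specialize (P2 (l ++ l') (tagged_part_app _ _ _ _ _ Hl Hl')
                (fine_mono _ _ _ _ (fine_app _ _ _ _ _ Hl Fl Fl') (Rmin_r _ _))).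
  rewrite (rsum_app f a s l l' Hl) in P2.
  assert (B' : sn i (rsum f s l') <= M * (r - s)).
  { apply (rsum_bound i f s r l' M Hl'). intros q Hq; apply Hf; lra. }
  assert (Hsplit : vsub (vadd (rsum f a l) (rsum f s l')) ys
                   = vadd (vsub (rsum f a l) ys) (rsum f s l')).
  { unfold vsub. rewrite <- !vadd_assoc. f_equal. apply vadd_comm. }
  rewrite sn_sub_sym in P2.
  pose proof (sn_sub_tri E i yr (vadd (rsum f a l) (rsum f s l')) ys).
  pose proof (sn_triangle E i (vsub (rsum f a l) ys) (rsum f s l')). rewrite Hsplit in H. lra.
Qed.

Lemma integral_dev_pow i f g t y w eps j : 0 <= t -> 0 <= eps ->
  (forall s, 0 <= s <= t -> sn i (vsub (f s) (g s)) <= eps * s ^ j) ->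
  is_integral f 0 t y -> is_integral g 0 t w -> sn i (vsub y w) <= eps * t ^ S j.
Proof.
  intros Ht Heps Hfg Hy Hw.
  eapply Rle_trans.
  - apply (integral_bound i (fun s => vsub (f s) (g s)) 0 t _ (eps * t ^ j)); [lra| |].
    + intros s Hs. eapply Rle_trans; [apply Hfg; lra|].
      apply Rmult_le_compat_l; [lra|]. apply pow_incr; lra.
    + now apply integral_sub.
  - simpl. lra.
Qed.

End RiemannIntegral.

Lemma pow_le_pow_of_le_1 s k m : 0 <= s <= 1 -> (k <= m)%nat -> s ^ m <= s ^ k.
Proof.
  intros Hs Hkm. replace m with (k + (m - k))%nat by lia. rewrite pow_add.
  assert (0 <= s ^ k) by (apply pow_le; lra).
  assert (s ^ (m - k) <= 1).
  { induction (m - k)%nat as [|p IH]; simpl; [lra|].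
    assert (0 <= s ^ p) by (apply pow_le; lra). nra. }
  assert (0 <= s ^ (m - k)) by (apply pow_le; lra). nra.
Qed.

Lemma fact_ge_1 k : 1 <= INR (Factorial.fact k).
Proof.
  pose proof (Factorial.lt_O_fact k). replace 1 with (INR 1) by reflexivity.
  apply le_INR. lia.
Qed.

Lemma tn_fact_nonneg k s : 0 <= s -> 0 <= tn_fact k s.
Proof.
  intros Hs. pose proof (fact_ge_1 k). unfold tn_fact.
  apply Rmult_le_pos; [now apply pow_le | apply Rlt_le, Rinv_0_lt_compat; lra].
Qed.

Lemma tn_fact_pos k s : 0 < s -> 0 < tn_fact k s.
Proof.
  intros Hs. pose proof (fact_ge_1 k). apply Rdiv_lt_0_compat; [now apply pow_lt | lra].
Qed.

Lemma tn_fact_incr k a b : 0 <= a <= b -> tn_fact k a <= tn_fact k b.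
Proof.
  intros Hab. pose proof (fact_ge_1 k). unfold tn_fact, Rdiv.
  apply Rmult_le_compat_r; [apply Rlt_le, Rinv_0_lt_compat; lra | now apply pow_incr].
Qed.

Lemma tn_fact_le_pow k s : 0 <= s -> tn_fact k s <= s ^ k.
Proof.
  intros Hs. pose proof (fact_ge_1 k). assert (0 <= s ^ k) by now apply pow_le.
  unfold tn_fact. apply (Rmult_le_reg_r (INR (Factorial.fact k))); [lra|].
  field_simplify; [nra | lra].
Qed.

Lemma tn_fact_S_0 k : tn_fact (S k) 0 = 0.
Proof. unfold tn_fact. rewrite pow_i by lia. apply Rdiv_0_l. Qed.

Lemma tn_fact_near_0 k s : 0 <= s <= 1 -> Rabs (tn_fact k s - tn_fact k 0) <= s.
Proof.
  intros Hs. destruct k as [|k].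
  - unfold tn_fact. rewrite Rminus_diag, Rabs_R0. lra.
  - rewrite tn_fact_S_0, Rminus_0_r, Rabs_pos_eq by (apply tn_fact_nonneg; lra).
    eapply Rle_trans; [apply tn_fact_le_pow; lra|].
    apply Rle_trans with (s ^ 1); [apply pow_le_pow_of_le_1; [lra | lia] | simpl; lra].
Qed.

(* Two ways of peeling one factor off [b^(k+2) - a^(k+2)], one for each bound. *)
Lemma pow_diff_bounds a b k : 0 <= a <= b ->
  INR (S k) * a ^ k * (b - a) <= b ^ S k - a ^ S k <= INR (S k) * b ^ k * (b - a).
Proof.
  intros Hab. induction k as [|k [IHl IHu]]; [simpl; lra|].
  assert (0 <= a ^ k) by (apply pow_le; lra).
  assert (a ^ k <= b ^ k) by (apply pow_incr; lra).
  assert (0 <= INR (S k)) by apply pos_INR.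
  rewrite S_INR. split.
  - replace (b ^ S (S k) - a ^ S (S k)) with (b * (b ^ S k - a ^ S k) + a ^ S k * (b - a))
      by (simpl; ring).
    assert (0 <= INR (S k) * a ^ k * (b - a)) by (apply Rmult_le_pos; [apply Rmult_le_pos|]; lra).
    assert (a * (INR (S k) * a ^ k * (b - a)) <= b * (INR (S k) * a ^ k * (b - a)))
      by (apply Rmult_le_compat_r; lra).
    assert (b * (INR (S k) * a ^ k * (b - a)) <= b * (b ^ S k - a ^ S k))
      by (apply Rmult_le_compat_l; lra).
    change (a ^ S k) with (a * a ^ k) in *. change (b ^ S k) with (b * b ^ k) in *. nra.
  - replace (b ^ S (S k) - a ^ S (S k)) with (a * (b ^ S k - a ^ S k) + b ^ S k * (b - a))
      by (simpl; ring).
    assert (a * (b ^ S k - a ^ S k) <= a * (INR (S k) * b ^ k * (b - a)))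
      by (apply Rmult_le_compat_l; lra).
    assert (0 <= INR (S k) * b ^ k * (b - a)) by (apply Rmult_le_pos; [apply Rmult_le_pos|]; lra).
    assert (a * (INR (S k) * b ^ k * (b - a)) <= b * (INR (S k) * b ^ k * (b - a)))
      by (apply Rmult_le_compat_r; lra).
    change (a ^ S k) with (a * a ^ k) in *. change (b ^ S k) with (b * b ^ k) in *. nra.
Qed.

Lemma tn_fact_diff_bounds k a b : 0 <= a <= b ->
  tn_fact k a * (b - a) <= tn_fact (S k) b - tn_fact (S k) a <= tn_fact k b * (b - a).
Proof.
  intros Hab. destruct (pow_diff_bounds a b k Hab) as [Hl Hu].
  pose proof (fact_ge_1 k). assert (HS : 0 < INR (S k)) by (apply lt_0_INR; lia).
  assert (Hdiff : tn_fact (S k) b - tn_fact (S k) a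
                  = (b ^ S k - a ^ S k) / INR (S k) / INR (Factorial.fact k)).
  { unfold tn_fact. change (Factorial.fact (S k)) with (S k * Factorial.fact k)%nat.
    rewrite mult_INR. field. lra. }
  rewrite Hdiff. unfold tn_fact. split.
  - apply (Rmult_le_reg_r (INR (S k) * INR (Factorial.fact k))); [nra|].
    field_simplify; lra.
  - apply (Rmult_le_reg_r (INR (S k) * INR (Factorial.fact k))); [nra|].
    field_simplify; lra.
Qed.

Fixpoint rsumR (g : R -> R) (a : R) (l : list (R * R)) : R :=
  match l with
  | nil => 0
  | (x, xi) :: l' => (x - a) * g xi + rsumR g x l'
  end.

Lemma rsumR_tn_fact k a b l d : 0 <= a -> tagged_part a b l -> fine d a l ->
  Rabs (rsumR (tn_fact k) a l - (tn_fact (S k) b - tn_fact (S k) a))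
  <= d * (tn_fact k b - tn_fact k a).
Proof.
  revert a. induction l as [|[x xi] l IH]; cbn [rsumR tagged_part fine]; intros a Ha Hl Hf.
  - subst. rewrite !Rminus_diag, Rabs_R0. lra.
  - destruct Hl as [Hxi Hl]. destruct Hf as [Hxa Hf]. pose proof (tagged_part_le _ _ _ Hl).
    specialize (IH x ltac:(lra) Hl Hf).
    destruct (tn_fact_diff_bounds k a x ltac:(lra)) as [Dl Du].
    pose proof (tn_fact_incr k a xi ltac:(lra)). pose proof (tn_fact_incr k xi x ltac:(lra)).
    pose proof (tn_fact_incr k x b ltac:(lra)).
    assert (Hpiece : Rabs ((x - a) * tn_fact k xi - (tn_fact (S k) x - tn_fact (S k) a))
                     <= d * (tn_fact k x - tn_fact k a)).
    { apply Rabs_le. nra. }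
    eapply Rle_trans; [|apply Rle_trans with (1 := Rplus_le_compat _ _ _ _ Hpiece IH); lra].
    eapply Rle_trans; [|apply Rabs_triang]. right. f_equal. ring.
Qed.

Lemma rsum_scal_vec {E : LCS} (g : R -> R) (v : E) a l :
  rsum (fun s => vscal (g s) v) a l = vscal (rsumR g a l) v.
Proof.
  revert a. induction l as [|[x xi] l IH]; simpl; intros a.
  - now rewrite vscal_zero_l.
  - now rewrite IH, vscal_assoc, vscal_distr_r.
Qed.

Lemma integral_tn_fact {E : LCS} (v : E) k t : 0 <= t ->
  is_integral (fun s => vscal (tn_fact k s) v) 0 t (vscal (tn_fact (S k) t) v).
Proof.
  intros Ht i eps Heps.
  set (C := tn_fact k t * sn i v + 1).
  assert (HC : 1 <= C).
  { pose proof (tn_fact_nonneg k t Ht). pose proof (sn_nonneg E i v). unfold C. nra. }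
  exists (eps / C). split; [apply Rdiv_lt_0_compat; lra|]. intros l Hl Hf.
  rewrite rsum_scal_vec, vsub_scal_l, sn_homog.
  pose proof (rsumR_tn_fact k 0 t l (eps / C) ltac:(lra) Hl Hf) as Hsum.
  rewrite tn_fact_S_0, Rminus_0_r in Hsum.
  pose proof (tn_fact_nonneg k 0 ltac:(lra)).
  assert (Hd : 0 < eps / C) by (apply Rdiv_lt_0_compat; lra).
  assert (Hb : Rabs (rsumR (tn_fact k) 0 l - tn_fact (S k) t) <= eps / C * tn_fact k t) by nra.
  pose proof (sn_nonneg E i v).
  apply Rle_lt_trans with (eps / C * tn_fact k t * sn i v); [now apply Rmult_le_compat_r|].
  assert (eps * (tn_fact k t * sn i v) < eps * C) by (apply Rmult_lt_compat_l; unfold C; lra).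
  apply (Rmult_lt_reg_r C); [lra|].
  replace (eps / C * tn_fact k t * sn i v * C) with (eps * (tn_fact k t * sn i v))
    by (field; lra).
  lra.
Qed.

Section IntegralExistence.
Variable E : LCS.
Implicit Types f : R -> E.

Definition unif_cont_on (i : idx E) f a b := forall eps, 0 < eps -> exists d, 0 < d /\
  forall s r, a <= s <= b -> a <= r <= b -> Rabs (s - r) < d -> sn i (vsub (f s) (f r)) <= eps.

Lemma unif_cont_on_sub i f a b c : unif_cont_on i f a b -> c <= b -> unif_cont_on i f a c.
Proof.
  intros H Hc eps Heps. destruct (H eps Heps) as [d [Hd P]]. exists d. split; auto.
  intros s r Hs Hr Hsr. apply P; auto; lra.
Qed.

(* Unlike [tagged_part], this survives cutting a
   cell at a point while keeping its tag. *)
Fixpoint near_part (d lo hi a b : R) (l : list (R * R)) : Prop :=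
  match l with
  | nil => a = b
  | (x, xi) :: l' => a <= x /\ Rabs (xi - a) < d /\ Rabs (xi - x) < d /\ lo <= xi <= hi /\
      near_part d lo hi x b l'
  end.

Lemma near_part_le d lo hi a b l : near_part d lo hi a b l -> a <= b.
Proof.
  revert a. induction l as [|[x xi] l IH]; simpl; intros a H; [lra|].
  destruct H as [H1 [_ [_ [_ H]]]]. apply IH in H. lra.
Qed.

Lemma near_part_point f d lo hi a l : near_part d lo hi a a l -> rsum f a l = vzero.
Proof.
  revert a. induction l as [|[x xi] l IH]; simpl; intros a H; auto.
  destruct H as [H1 [_ [_ [_ H]]]]. pose proof (near_part_le _ _ _ _ _ _ H).
  replace x with a in * by lra. rewrite IH, Rminus_diag, vscal_zero_l, vadd_zero; auto.
Qed.

Lemma tagged_near_part d lo hi a b l : tagged_part a b l -> fine d a l -> lo <= a -> b <= hi ->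
  near_part d lo hi a b l.
Proof.
  revert a. induction l as [|[x xi] l IH]; simpl; intros a H Hf Hlo Hhi; auto.
  destruct H as [H1 H2]. destruct Hf as [F1 F2]. pose proof (tagged_part_le _ _ _ H2).
  repeat split; try lra; try (apply Rabs_def1; lra). apply IH; auto; lra.
Qed.

Section NearPartitions.
Variables (f : R -> E) (i : idx E) (eps d lo hi b : R).
Hypothesis Hf : forall s r, lo <= s <= hi -> lo <= r <= hi -> Rabs (s - r) < 2 * d ->
  sn i (vsub (f s) (f r)) <= eps.
Hypothesis Heps : 0 <= eps.

(* Induction on the total number of cells: cut the longer first cell at the end of the
   shorter one, which removes one cell from the pair of partitions. *)
Lemma rsum_near_part_close N : forall P Q a, (length P + length Q <= N)%nat ->
  near_part d lo hi a b P -> near_part d lo hi a b Q ->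
  sn i (vsub (rsum f a P) (rsum f a Q)) <= eps * (b - a).
Proof.
  induction N as [|N IH]; intros P Q a Hlen HP HQ.
  - destruct P; [|simpl in Hlen; lia]. destruct Q; [|simpl in Hlen; lia].
    simpl in *. subst. rewrite vsub_diag, sn_zero. lra.
  - assert (Hstep : forall x1 xi P y1 eta Q, (length P + S (length Q) <= N)%nat -> x1 <= y1 ->
      near_part d lo hi a b ((x1, xi) :: P) -> near_part d lo hi a b ((y1, eta) :: Q) ->
      sn i (vsub (rsum f a ((x1, xi) :: P)) (rsum f a ((y1, eta) :: Q))) <= eps * (b - a)).
    { clear P Q Hlen HP HQ. intros x1 xi P y1 eta Q Hlen Hxy HP HQ.
      destruct HP as [P1 [P2 [P3 [P4 P5]]]]. destruct HQ as [Q1 [Q2 [Q3 [Q4 Q5]]]].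
      apply Rabs_def2 in P2, P3, Q2, Q3.
      assert (HQ' : near_part d lo hi x1 b ((y1, eta) :: Q)).
      { simpl. repeat split; auto; try lra; apply Rabs_def1; lra. }
      specialize (IH P ((y1, eta) :: Q) x1 ltac:(simpl; lia) P5 HQ').
      cbn [rsum] in *.
      replace (vadd (vscal (y1 - a) (f eta)) (rsum f y1 Q)) with
        (vadd (vscal (x1 - a) (f eta)) (vadd (vscal (y1 - x1) (f eta)) (rsum f y1 Q))).
      2:{ rewrite vadd_assoc, <- vscal_distr_r. do 2 f_equal. ring. }
      rewrite vsub_add. eapply Rle_trans; [apply sn_triangle|].
      rewrite <- vscal_sub, sn_homog, Rabs_pos_eq by lra.
      assert (sn i (vsub (f xi) (f eta)) <= eps) by (apply Hf; auto; apply Rabs_def1; lra).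
      pose proof (near_part_le _ _ _ _ _ _ P5).
      assert ((x1 - a) * sn i (vsub (f xi) (f eta)) <= (x1 - a) * eps)
        by (apply Rmult_le_compat_l; lra).
      lra. }
    destruct P as [|[x1 xi] P].
    + simpl in HP. subst. rewrite (near_part_point f d lo hi b Q HQ). simpl.
      rewrite vsub_diag, sn_zero. lra.
    + destruct Q as [|[y1 eta] Q].
      * simpl in HQ. subst. rewrite (near_part_point f d lo hi b _ HP). simpl.
        rewrite vsub_diag, sn_zero. lra.
      * simpl in Hlen. destruct (Rle_dec x1 y1) as [Hxy|Hxy].
        -- apply Hstep; auto. lia.
        -- rewrite sn_sub_sym. apply Hstep; auto; [lia | lra].
Qed.

End NearPartitions.

Lemma rsum_cauchy i f a b : a <= b -> unif_cont_on i f a b ->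
  forall eps, 0 < eps -> exists d, 0 < d /\ forall l1 l2,
    tagged_part a b l1 -> fine d a l1 -> tagged_part a b l2 -> fine d a l2 ->
    sn i (vsub (rsum f a l1) (rsum f a l2)) < eps.
Proof.
  intros Hab UC eps Heps. set (e := eps / (b - a + 1)).
  assert (He : 0 < e) by (apply Rdiv_lt_0_compat; lra).
  destruct (UC e He) as [d0 [Hd0 H0]].
  exists (d0 / 2). split; [lra|]. intros l1 l2 T1 F1 T2 F2.
  eapply Rle_lt_trans.
  - apply (rsum_near_part_close f i e (d0 / 2) a b b) with (N := (length l1 + length l2)%nat);
      try lra.
    + intros s r Hs Hr Hsr. apply H0; auto. lra.
    + apply Nat.le_refl.
    + apply tagged_near_part; auto; lra.
    + apply tagged_near_part; auto; lra.
  - unfold e. apply (Rmult_lt_reg_r (b - a + 1)); [lra|].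
    replace (eps / (b - a + 1) * (b - a) * (b - a + 1)) with (eps * (b - a)) by (field; lra).
    nra.
Qed.

Lemma integral_exists f a b : a <= b -> (forall i, unif_cont_on i f a b) ->
  exists y, is_integral f a b y.
Proof.
  intros Hab UC. set (u N := rsum f a (mesh_part a b N)).
  destruct (seq_complete E u) as [L HL].
  { intros i eps Heps. destruct (rsum_cauchy i f a b Hab (UC i) eps Heps) as [d [Hd K]].
    destruct (mesh_part_fine a b d Hab Hd) as [N HN].
    exists N. intros m k Hm Hk. apply K; auto using mesh_part_tagged. }
  exists L. intros i eps Heps.
  destruct (rsum_cauchy i f a b Hab (UC i) (eps / 2)) as [d [Hd K]]; [lra|].
  exists d. split; auto. intros l Hl Hf.
  destruct (mesh_part_fine a b d Hab Hd) as [N1 HN1].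
  destruct (HL i (eps / 2)) as [N2 HN2]; [lra|].
  set (N := max N1 N2).
  specialize (K l _ Hl Hf (mesh_part_tagged a b N Hab) (HN1 N ltac:(lia))).
  specialize (HN2 N ltac:(lia)).
  pose proof (sn_sub_tri E i (rsum f a l) (u N) L). unfold vsub, u in *. lra.
Qed.

Lemma unif_cont_of_cont i f a b : a <= b ->
  (forall t, a <= t <= b -> forall eps, 0 < eps -> exists d, 0 < d /\
     forall s, a <= s <= b -> Rabs (s - t) < d -> sn i (vsub (f s) (f t)) < eps) ->
  unif_cont_on i f a b.
Proof.
  intros Hab Hc eps Heps.
  (* [c] is the supremum of the points up to which the conclusion holds. *)
  set (Good x := a <= x <= b /\ exists d, 0 < d /\ forall s r, a <= s <= x -> a <= r <= x ->
                   Rabs (s - r) < d -> sn i (vsub (f s) (f r)) <= eps).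
  assert (Ga : Good a).
  { split; [lra|]. exists 1. split; [lra|]. intros s r Hs Hr _.
    replace s with r by lra. rewrite vsub_diag, sn_zero. lra. }
  destruct (completeness Good) as [c [Hub Hlub]].
  { exists b. intros x [Hx _]. lra. }
  { now exists a. }
  assert (Hac : a <= c) by now apply Hub.
  assert (Hcb : c <= b) by (apply Hlub; intros x [Hx _]; lra).
  destruct (Hc c ltac:(lra) (eps / 2) ltac:(lra)) as [dc [Hdc Pc]].
  assert (Hnear_c : forall s r, a <= s <= b -> a <= r <= b -> Rabs (s - c) < dc ->
            Rabs (r - c) < dc -> sn i (vsub (f s) (f r)) <= eps).
  { intros s r Hs Hr Hsc Hrc. pose proof (Pc s Hs Hsc). pose proof (Pc r Hr Hrc).
    pose proof (sn_sub_tri E i (f s) (f c) (f r)). rewrite (sn_sub_sym E i (f c)) in H1. lra. }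
  assert (Hx0 : exists x0, Good x0 /\ c - dc / 2 < x0).
  { apply NNPP. intros Hn. assert (c <= c - dc / 2); [|lra].
    apply Hlub. intros x Hx. apply Rnot_lt_le. intros Hlt. apply Hn. now exists x. }
  destruct Hx0 as [x0 [[Hx0 [d0 [Hd0 P0]]] Hx0c]].
  assert (Hx0le : x0 <= c) by (apply Hub; split; auto; now exists d0).
  set (x' := Rmin b (c + dc / 2)).
  assert (Hx' : c <= x' <= b) by (split; [apply Rmin_glb; lra | apply Rmin_l]).
  assert (Hx'c : x' <= c + dc / 2) by apply Rmin_r.
  assert (Gx' : Good x').
  { split; [lra|]. exists (Rmin d0 (dc / 2)). split; [apply Rmin_glb_lt; lra|].
    intros s r Hs Hr Hsr. pose proof (Rmin_l d0 (dc / 2)). pose proof (Rmin_r d0 (dc / 2)).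
    apply Rabs_def2 in Hsr.
    destruct (Rle_dec s x0), (Rle_dec r x0);
      [apply P0 | apply Hnear_c .. ]; try lra; apply Rabs_def1; lra. }
  assert (x' = b).
  { assert (x' <= c) by now apply Hub. unfold x' in *.
    destruct (Rle_dec b (c + dc / 2)); [now rewrite Rmin_left|].
    rewrite Rmin_right in * by lra. lra. }
  destruct Gx' as [_ [d [Hd Pd]]]. exists d. split; auto.
  intros s r Hs Hr Hsr. apply Pd; auto; lra.
Qed.

Lemma unif_cont_bounded i f a b : a <= b -> unif_cont_on i f a b ->
  exists M, forall s, a <= s <= b -> sn i (f s) <= M.
Proof.
  intros Hab UC. destruct (UC 1 ltac:(lra)) as [d [Hd P]].
  assert (Hk : forall k s, a <= s <= b -> s <= a + INR k * (d / 2) ->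
                 sn i (f s) <= sn i (f a) + INR k).
  { induction k as [|k IH]; intros s Hs Hsk.
    - simpl in Hsk. replace s with a by lra. simpl. lra.
    - rewrite S_INR in *. destruct (Rle_dec s (a + INR k * (d / 2))) as [Hle|Hle].
      + specialize (IH s Hs Hle). lra.
      + set (r := Rmax a (s - d / 2)).
        assert (a <= r) by apply Rmax_l. assert (s - d / 2 <= r) by apply Rmax_r.
        assert (r <= s) by (apply Rmax_lub; lra).
        assert (r <= a + INR k * (d / 2)) by (pose proof (pos_INR k); apply Rmax_lub; nra).
        specialize (IH r ltac:(lra) ltac:(lra)).
        assert (sn i (vsub (f s) (f r)) <= 1) by (apply P; try lra; apply Rabs_def1; lra).
        pose proof (sn_le_sub E i (f s) (f r)). lra. }
  destruct (INR_archimed (d / 2) (b - a) ltac:(lra)) as [k Hk'].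
  exists (sn i (f a) + INR k). intros s Hs. apply Hk; auto. lra.
Qed.

Lemma primitive_unif_cont i f F a b : a <= b -> unif_cont_on i f a b ->
  (forall t, a <= t <= b -> is_integral f a t (F t)) -> unif_cont_on i F a b.
Proof.
  intros Hab UC HF. destruct (unif_cont_bounded i f a b Hab UC) as [M HM].
  assert (HM0 : 0 <= M) by (eapply Rle_trans; [apply sn_nonneg | apply (HM a); lra]).
  assert (Hinc : forall s r, a <= s <= r -> r <= b -> sn i (vsub (F r) (F s)) <= M * (r - s)).
  { intros s r Hsr Hrb. apply (integral_increment_bound E i f a s r); auto; try apply HF; try lra.
    intros q Hq. apply HM. lra. }
  intros eps Heps. exists (eps / (M + 1)). split; [apply Rdiv_lt_0_compat; lra|].
  intros s r Hs Hr Hsr. apply Rabs_def2 in Hsr.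
  assert (Hscale : forall h, 0 <= h < eps / (M + 1) -> M * h <= eps).
  { intros h Hh. apply Rle_trans with (M * (eps / (M + 1))); [apply Rmult_le_compat_l; lra|].
    apply (Rmult_le_reg_r (M + 1)); [lra|]. field_simplify; lra. }
  destruct (Rle_dec s r).
  - rewrite sn_sub_sym. eapply Rle_trans; [apply Hinc; lra | apply Hscale; lra].
  - eapply Rle_trans; [apply Hinc; lra | apply Hscale; lra].
Qed.

End IntegralExistence.

Section ClosedOperators.
Variable E : LCS.
Variable A : Op E.
Hypothesis HA : linear_op A.

Lemma linear_op_app_zero : app A vzero = vzero.
Proof.
  destruct HA as [H0 [Hadd _]]. destruct (Hadd vzero vzero H0 H0) as [_ H].
  rewrite vadd_zero in H. symmetry. apply (vadd_cancel_l E (app A vzero)).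
  now rewrite vadd_zero.
Qed.

Lemma rsum_dom f a b l : tagged_part a b l -> (forall s, a <= s <= b -> dom A (f s)) ->
  dom A (rsum f a l) /\ app A (rsum f a l) = rsum (fun s => app A (f s)) a l.
Proof.
  pose proof linear_op_app_zero as HA0. destruct HA as [H0 [Hadd Hsc]].
  revert a. induction l as [|[x xi] l IH]; simpl; intros a Hl Hd; auto.
  destruct Hl as [H1 H2]. pose proof (tagged_part_le _ _ _ H2).
  destruct (IH x H2) as [D1 E1]; [intros; apply Hd; lra|].
  destruct (Hsc (x - a) (f xi)) as [D2 E2]; [apply Hd; lra|].
  destruct (Hadd _ _ D2 D1) as [D3 E3]. split; auto. now rewrite E3, E2, E1.
Qed.

Lemma domPow_mono m x : domPow A m x -> forall k, (k <= m)%nat -> domPow A k x.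
Proof.
  revert x. induction m as [|m IH]; intros x H k Hk.
  - now replace k with O by lia.
  - destruct k as [|k]; [exact I|]. destruct H. split; auto. apply IH; auto. lia.
Qed.

Lemma domPow_add m x y : domPow A m x -> domPow A m y -> domPow A m (vadd x y).
Proof.
  revert x y. induction m as [|m IH]; intros x y Hx Hy; simpl in *; auto.
  destruct Hx, Hy. destruct HA as [_ [Hadd _]]. destruct (Hadd x y) as [D Eq]; auto.
  split; auto. rewrite Eq. auto.
Qed.

Lemma domPow_scal m c x : domPow A m x -> domPow A m (vscal c x).
Proof.
  revert x. induction m as [|m IH]; intros x Hx; simpl in *; auto.
  destruct Hx. destruct HA as [_ [_ Hsc]]. destruct (Hsc c x) as [D Eq]; auto.
  split; auto. rewrite Eq. auto.
Qed.

Lemma domPow_sub m x y : domPow A m x -> domPow A m y -> domPow A m (vsub x y).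
Proof.
  intros Hx Hy. apply domPow_add; auto. rewrite <- vscal_m1. now apply domPow_scal.
Qed.

End ClosedOperators.

Lemma closed_op_integral {E : LCS} (A : Op E) f a b y z : closed_op A -> a <= b ->
  (forall s, a <= s <= b -> dom A (f s)) -> is_integral f a b y ->
  is_integral (fun s => app A (f s)) a b z -> dom A y /\ app A y = z.
Proof.
  intros [HA Hcl] Hab Hd H1 H2. apply Hcl. intros F eps Heps.
  destruct (common_delta E (fun i d => forall l, tagged_part a b l -> fine d a l ->
     sn i (vsub (rsum f a l) y) < eps /\
     sn i (vsub (rsum (fun s => app A (f s)) a l) z) < eps)) with (F := F)
    as [d [Hdd HF]].
  { intros i. destruct (H1 i eps Heps) as [d1 [Hd1 P1]].
    destruct (H2 i eps Heps) as [d2 [Hd2 P2]].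
    exists (Rmin d1 d2). split; [now apply Rmin_glb_lt|].
    pose proof (Rmin_l d1 d2). pose proof (Rmin_r d1 d2).
    intros d' Hd' Hle l Hl Hf.
    split; [apply P1 | apply P2]; auto; eapply fine_mono; eauto; lra. }
  destruct (fine_part_exists a b d Hab Hdd) as [l [Hl Hf]].
  destruct (rsum_dom E A HA f a b l Hl Hd) as [D1 E1].
  exists (rsum f a l). split; auto. intros i Hi. destruct (HF i Hi l Hl Hf) as [Q1 Q2].
  rewrite E1, sn_sub_sym, (sn_sub_sym _ i z). auto.
Qed.

Lemma sn_sub_normalize {E : LCS} i (x z : E) c : 0 < c ->
  sn i (vsub x (vscal (/ c) z)) = / c * sn i (vsub z (vscal c x)).
Proof.
  intros Hc.
  replace (vsub x (vscal (/ c) z)) with (vscal (- / c) (vsub z (vscal c x))).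
  - rewrite sn_homog, Rabs_Ropp, Rabs_pos_eq; auto. apply Rlt_le, Rinv_0_lt_compat; auto.
  - rewrite vscal_sub, vscal_assoc. replace (- / c * c) with (- (1)) by (field; lra).
    rewrite vscal_m1, vscal_opp_l. unfold vsub. rewrite vopp_vopp. apply vadd_comm.
Qed.

Lemma in_closure_of_tn_fact_approx {E : LCS} (P : E -> Prop) x k (Y : R -> E -> Prop) T :
  0 < T -> (forall a z, P z -> P (vscal a z)) ->
  (forall t, 0 < t <= T -> exists z, Y t z /\ P z) ->
  (forall i eps, 0 < eps -> exists d, 0 < d /\ forall t z, 0 < t <= d -> Y t z ->
     sn i (vsub z (vscal (tn_fact k t) x)) <= eps * t ^ k) ->
  in_closure P x.
Proof.
  intros HT HPscal HY Happrox F eps Heps.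
  set (K := INR (Factorial.fact k)). assert (HK : 1 <= K) by apply fact_ge_1.
  set (eps' := eps / (2 * K)). assert (He' : 0 < eps') by (apply Rdiv_lt_0_compat; lra).
  destruct (common_delta E (fun i d => forall t z, 0 < t <= d -> Y t z ->
     sn i (vsub z (vscal (tn_fact k t) x)) <= eps' * t ^ k)) with (F := F) as [d [Hd HF]].
  { intros i. destruct (Happrox i eps' He') as [d [Hd Pd]].
    exists d. split; auto. intros d' Hd' Hle t z Ht. apply Pd. lra. }
  set (t := Rmin d T). assert (Ht : 0 < t <= d) by (split; [now apply Rmin_glb_lt | apply Rmin_l]).
  destruct (HY t (conj (proj1 Ht) (Rmin_r d T))) as [z [Yz Pz]].
  set (c := tn_fact k t). assert (Hc : 0 < c) by (apply tn_fact_pos; lra).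
  exists (vscal (/ c) z). split; [now apply HPscal|]. intros i Hi.
  rewrite sn_sub_normalize by auto.
  assert (Hct : / c * (eps' * t ^ k) = eps / 2).
  { unfold c, tn_fact, eps'. fold K. field. split; [lra | apply pow_nonzero; lra]. }
  assert (/ c * sn i (vsub z (vscal c x)) <= / c * (eps' * t ^ k)).
  { apply Rmult_le_compat_l; [apply Rlt_le, Rinv_0_lt_compat; auto | now apply HF]. }
  lra.
Qed.

Lemma tau_pos_initial_segment tau : tau_pos tau ->
  exists T, 0 < T <= 1 /\ forall s, 0 <= s <= T -> in_I tau s.
Proof.
  destruct tau as [T|]; simpl; intros H.
  - exists (Rmin 1 (T / 2)). pose proof (Rmin_l 1 (T / 2)). pose proof (Rmin_r 1 (T / 2)).
    split; [split; [apply Rmin_glb_lt|]; lra|]. intros s Hs. split; lra.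
  - exists 1. split; [lra|]. intros s Hs. split; auto; lra.
Qed.

Section IntegratedSemigroup.
Variables (E : LCS) (A : Op E) (tau : option R) (n : nat) (Sg : R -> E -> E) (T : R).
Hypothesis HAc : closed_op A.
Hypothesis HS : generates_int_semigroup A tau n Sg.
Hypothesis HT : 0 < T <= 1 /\ forall s, 0 <= s <= T -> in_I tau s.

Let HA : linear_op A := proj1 HAc.

Lemma isg_domPow t m z : in_I tau t -> domPow A m z -> domPow A m (Sg t z).
Proof.
  intros Ht. destruct HS as [_ [_ [_ [Hcomm _]]]]. revert z.
  induction m as [|m IH]; intros z Hz; simpl in *; auto.
  destruct Hz as [D1 D2]. destruct (Hcomm t Ht z D1) as [D3 E3]. split; auto. rewrite E3. auto.
Qed.

Lemma isg_at_0 z : Sg 0 z = vscal (tn_fact n 0) z.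
Proof.
  destruct HS as [_ [_ [_ [_ [Hie _]]]]]. destruct HT as [HT1 HTI].
  destruct (Hie 0 z (HTI 0 ltac:(lra))) as [y [Hy [Dy Ey]]].
  replace y with (@vzero E) in Ey
    by (apply (integral_unique E (fun s => Sg s z) 0 0); [lra | apply integral_point | exact Hy]).
  rewrite linear_op_app_zero in Ey by exact HA. apply vsub_eq0. auto.
Qed.

Lemma isg_integral_generator z t : dom A z -> in_I tau t ->
  is_integral (fun s => Sg s (app A z)) 0 t (vsub (Sg t z) (vscal (tn_fact n t) z)).
Proof. intros Hz Ht. destruct HS as [_ [_ [_ [_ [_ Hg]]]]]. now apply (proj1 (Hg z (app A z))). Qed.

Lemma isg_sub_tn_fact_0 z i eps : 0 < eps -> exists d, 0 < d <= T /\
  forall s, 0 <= s <= d -> sn i (vsub (Sg s z) (vscal (tn_fact n s) z)) <= eps.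
Proof.
  intros Heps. destruct HS as [_ [Hcont _]]. destruct HT as [HT1 HTI].
  destruct (Hcont z 0 (HTI 0 ltac:(lra)) i (eps / 2)) as [d0 [Hd0 P0]]; [lra|].
  pose proof (sn_nonneg E i z).
  set (d := Rmin (Rmin (d0 / 2) T) (eps / (2 * (sn i z + 1)))).
  assert (Hd1 : d <= Rmin (d0 / 2) T) by apply Rmin_l.
  assert (Hd2 : d <= eps / (2 * (sn i z + 1))) by apply Rmin_r.
  pose proof (Rmin_l (d0 / 2) T). pose proof (Rmin_r (d0 / 2) T).
  assert (Hdpos : 0 < d) by (repeat apply Rmin_glb_lt; try apply Rdiv_lt_0_compat; lra).
  exists d. split; [lra|]. intros s Hs.
  assert (HS0 : sn i (vsub (Sg s z) (Sg 0 z)) < eps / 2)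
    by (apply P0; [apply HTI; lra | apply Rabs_def1; lra]).
  assert (Htn : sn i (vsub (Sg 0 z) (vscal (tn_fact n s) z)) <= eps / 2).
  { rewrite isg_at_0, vsub_scal_l, sn_homog, Rabs_minus_sym.
    pose proof (tn_fact_near_0 n s ltac:(lra)).
    apply Rle_trans with (s * sn i z); [now apply Rmult_le_compat_r|].
    apply Rle_trans with (eps / (2 * (sn i z + 1)) * (sn i z + 1)); [nra|].
    right. field. lra. }
  pose proof (sn_sub_tri E i (Sg s z) (Sg 0 z) (vscal (tn_fact n s) z)). lra.
Qed.

Lemma isg_sub_tn_fact_small j : (j <= n)%nat -> forall z, domPow A j z ->
  forall i eps, 0 < eps -> exists d, 0 < d <= T /\
    forall s, 0 <= s <= d -> sn i (vsub (Sg s z) (vscal (tn_fact n s) z)) <= eps * s ^ j.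
Proof.
  destruct HT as [HT1 HTI].
  induction j as [|j IH]; intros Hj z Hz i eps Heps.
  - destruct (isg_sub_tn_fact_0 z i eps Heps) as [d [Hd P]].
    exists d. split; auto. intros s Hs. simpl. rewrite Rmult_1_r. auto.
  - destruct Hz as [Dz Hz].
    destruct (IH ltac:(lia) (app A z) Hz i (eps / 2)) as [d1 [Hd1 P1]]; [lra|].
    pose proof (sn_nonneg E i (app A z)).
    set (d := Rmin d1 (eps / (2 * (sn i (app A z) + 1)))).
    assert (Hdd1 : d <= d1) by apply Rmin_l.
    assert (Hdeps : d <= eps / (2 * (sn i (app A z) + 1))) by apply Rmin_r.
    assert (Hdpos : 0 < d) by (apply Rmin_glb_lt; [lra | apply Rdiv_lt_0_compat; lra]).
    exists d. split; [lra|]. intros s Hs.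
    assert (Hpow : 0 <= s ^ S j) by (apply pow_le; lra).
    assert (Hdev : sn i (vsub (vsub (Sg s z) (vscal (tn_fact n s) z))
                              (vscal (tn_fact (S n) s) (app A z))) <= eps / 2 * s ^ S j).
    { apply (integral_dev_pow E i (fun r => Sg r (app A z)) (fun r => vscal (tn_fact n r) (app A z)));
        try lra.
      - intros r Hr. apply P1. lra.
      - apply isg_integral_generator; auto. apply HTI. lra.
      - apply integral_tn_fact. lra. }
    assert (Hpoly : sn i (vscal (tn_fact (S n) s) (app A z)) <= eps / 2 * s ^ S j).
    { rewrite sn_homog, Rabs_pos_eq by (apply tn_fact_nonneg; lra).
      apply Rle_trans with (s ^ S (S j) * sn i (app A z)).
      { apply Rmult_le_compat_r; auto. eapply Rle_trans; [apply tn_fact_le_pow; lra|].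
        apply pow_le_pow_of_le_1; [lra | lia]. }
      change (s ^ S (S j)) with (s * s ^ S j).
      assert (s * sn i (app A z) <= eps / 2).
      { apply Rle_trans with (eps / (2 * (sn i (app A z) + 1)) * (sn i (app A z) + 1)); [nra|].
        right. field. lra. }
      nra. }
    pose proof (sn_le_sub E i (vsub (Sg s z) (vscal (tn_fact n s) z))
                  (vscal (tn_fact (S n) s) (app A z))). lra.
Qed.

Lemma isg_stat_index : stat_index A n.
Proof.
  destruct HT as [HT1 HTI]. intros m Hm x Hx.
  apply (in_closure_of_tn_fact_approx _ x (S n) (fun t y => is_integral (fun s => Sg s x) 0 t y) T).
  - lra.
  - intros a z. now apply domPow_scal.
  - intros t Ht. destruct HS as [_ [_ [_ [_ [Hie _]]]]].
    destruct (Hie t x (HTI t ltac:(lra))) as [y [Hy [Dy Ey]]].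
    exists y. split; auto. split; auto. rewrite Ey.
    apply domPow_sub; auto; [apply isg_domPow; auto; apply HTI; lra | now apply domPow_scal].
  - intros i eps Heps.
    destruct (isg_sub_tn_fact_small n (Nat.le_refl n) x (domPow_mono E A m x Hx n Hm) i eps Heps)
      as [d [Hd P]].
    exists d. split; [lra|]. intros t y Ht Hy.
    apply (integral_dev_pow E i (fun s => Sg s x) (fun s => vscal (tn_fact n s) x)); try lra.
    + intros s Hs. apply P. lra.
    + exact Hy.
    + apply integral_tn_fact. lra.
Qed.

End IntegratedSemigroup.

Section MildSolution.
Variables (E : LCS) (A : Op E) (tau : option R) (x : E) (u : R -> E) (T : R).
Hypothesis HAc : closed_op A.
Hypothesis HT : 0 < T <= 1 /\ forall s, 0 <= s <= T -> in_I tau s.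
Hypothesis Hu : mild_solution A tau x u.

Let HA : linear_op A := proj1 HAc.

(* The paper's V_k; junk for t outside [0, T], where the integral need not exist. *)
Fixpoint iter_integral (k : nat) (t : R) : E :=
  match k with
  | O => u t
  | S k' => epsilon (inhabits vzero) (fun y => is_integral (iter_integral k') 0 t y)
  end.

Lemma iter_integral_spec k : (forall i, unif_cont_on E i (iter_integral k) 0 T) /\
  forall t, 0 <= t <= T -> is_integral (iter_integral k) 0 t (iter_integral (S k) t).
Proof.
  destruct HT as [HT1 HTI].
  assert (Hprim : forall j, (forall i, unif_cont_on E i (iter_integral j) 0 T) ->
     forall t, 0 <= t <= T -> is_integral (iter_integral j) 0 t (iter_integral (S j) t)).
  { intros j Hj t Ht. cbn [iter_integral]. apply epsilon_spec, integral_exists; [lra|].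
    intros i. eapply unif_cont_on_sub; [apply Hj | lra]. }
  induction k as [|k [UC INT]].
  - assert (UC0 : forall i, unif_cont_on E i (iter_integral 0) 0 T).
    { intros i. apply unif_cont_of_cont; [lra|]. intros t Ht eps Heps.
      destruct Hu as [Hc _]. destruct (Hc t (HTI t Ht) i eps Heps) as [d [Hd P]].
      exists d. split; auto. }
    split; auto.
  - assert (UC1 : forall i, unif_cont_on E i (iter_integral (S k)) 0 T)
      by (intros i; apply (primitive_unif_cont E i (iter_integral k)); auto; lra).
    split; auto.
Qed.

Lemma mild_at_0 : u 0 = x.
Proof.
  destruct HT as [HT1 HTI]. destruct Hu as [_ Hm].
  destruct (Hm 0 (HTI 0 ltac:(lra))) as [y [Hy [Dy Ey]]].
  replace y with (@vzero E) in Ey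
    by (apply (integral_unique E u 0 0); [lra | apply integral_point | exact Hy]).
  rewrite linear_op_app_zero in Ey by exact HA. apply vsub_eq0. auto.
Qed.

Lemma iter_integral_dom k t : 0 <= t <= T -> dom A (iter_integral (S k) t) /\
  app A (iter_integral (S k) t) = vsub (iter_integral k t) (vscal (tn_fact k t) x).
Proof.
  destruct HT as [HT1 HTI]. revert t.
  induction k as [|k IH]; intros t Ht.
  - destruct Hu as [_ Hm]. destruct (Hm t (HTI t Ht)) as [y [Hy [Dy Ey]]].
    replace y with (iter_integral 1 t) in *
      by (apply (integral_unique E u 0 t); [lra | apply (iter_integral_spec 0); auto | exact Hy]).
    split; auto. rewrite Ey. unfold tn_fact. simpl. now rewrite Rdiv_1_r, vscal_one.
  - apply (closed_op_integral A (iter_integral (S k)) 0 t); auto; try lra.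
    + intros s Hs. apply IH. lra.
    + apply (iter_integral_spec (S k)); auto.
    + apply (integral_ext E (fun s => vsub (iter_integral k s) (vscal (tn_fact k s) x))).
      * intros s Hs. symmetry. apply IH. lra.
      * apply integral_sub; [apply (iter_integral_spec k); auto | apply integral_tn_fact; lra].
Qed.

Lemma iter_integral_domPow m : domPow A m x -> forall j, (j <= S m)%nat ->
  forall k, (j <= k)%nat -> forall t, 0 <= t <= T -> domPow A j (iter_integral k t).
Proof.
  intros Hx j. induction j as [|j IH]; intros Hj k Hk t Ht; [exact I|].
  destruct k as [|k]; [lia|]. destruct (iter_integral_dom k t Ht) as [D Eq].
  split; auto. rewrite Eq. apply domPow_sub; auto; [apply IH; auto; lia|].
  apply domPow_scal; auto. apply (domPow_mono E A m x Hx). lia.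
Qed.

Lemma iter_integral_dev i t M : 0 <= t <= T -> 0 <= M ->
  (forall s, 0 <= s <= t -> sn i (vsub (u s) x) <= M) ->
  forall k s, 0 <= s <= t -> sn i (vsub (iter_integral k s) (vscal (tn_fact k s) x)) <= M * s ^ k.
Proof.
  intros Ht HM Hux k. induction k as [|k IH]; intros s Hs.
  - unfold tn_fact. simpl. rewrite Rdiv_1_r, vscal_one, Rmult_1_r. auto.
  - apply (integral_dev_pow E i (iter_integral k) (fun r => vscal (tn_fact k r) x)); try lra.
    + intros r Hr. apply IH. lra.
    + apply (iter_integral_spec k). lra.
    + apply integral_tn_fact. lra.
Qed.

Lemma mild_solution_approx m : domPow A m x -> in_closure (domPow A (S m)) x.
Proof.
  intros Hx. destruct HT as [HT1 HTI].
  apply (in_closure_of_tn_fact_approx _ x (S m) (fun t y => y = iter_integral (S m) t) T).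
  - lra.
  - intros a z. now apply domPow_scal.
  - intros t Ht. exists (iter_integral (S m) t). split; auto.
    apply (iter_integral_domPow m Hx); auto; lra.
  - intros i eps Heps. destruct Hu as [Hc _].
    destruct (Hc 0 (HTI 0 ltac:(lra)) i eps Heps) as [d [Hd P]].
    exists (Rmin (d / 2) T). split; [apply Rmin_glb_lt; lra|]. intros t y Ht ->.
    pose proof (Rmin_l (d / 2) T). pose proof (Rmin_r (d / 2) T).
    apply (iter_integral_dev i t eps); try lra.
    intros s Hs. rewrite <- mild_at_0. left. apply P; [apply HTI; lra | apply Rabs_def1; lra].
Qed.

End MildSolution.

Theorem proposition2p3 (E : LCS) (A : Op E) (tau : option R) (n : nat) :
  closed_op A -> tau_pos tau ->
  ((forall x : E, domPow A n x -> unique_mild A tau x) -> stat_dense_le A n) /\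
  (forall S : R -> E -> E, generates_int_semigroup A tau n S -> stat_dense_le A n).
Proof.
  intros HAc Htau. destruct (tau_pos_initial_segment tau Htau) as [T HT].
  split.
  - intros Hmild. exists n. split; [lia|]. intros m Hm x Hx.
    destruct (Hmild x (domPow_mono E A m x Hx n Hm)) as [u [Hu _]].
    exact (mild_solution_approx E A tau x u T HAc HT Hu m Hx).
  - intros S HS. exists n. split; [lia|]. exact (isg_stat_index E A tau n S T HAc HS HT).
Qed.
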